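(* Let $\mathcal{K}\subseteq\mathbb{R}\cup\{\pm\infty\}$ have nonzero Lebesgue measure, let $\varpi:\mathcal{K}\to\mathbb{R}_{\geq 0}$ be Lebesgue integrable with only countably (finitely or infinitely) many zeros, and let $d\in\mathbb{N}$. Let $\mathbf{f}(\cdot)=\mathrm{Col}_{i=1}^d f_i(\cdot)\in\mathbb{L}^2_{\varpi}(\mathcal{K};\mathbb{R}^d)$ satisfy $$\int_{\mathcal{K}}\varpi(\tau)\mathbf{f}(\tau)\mathbf{f}^\top(\tau)\,d\tau\succ 0 .$$ For $n\in\mathbb{N}$ define $F(\tau)=\mathbf{f}(\tau)\otimes I_n\in\mathbb{R}^{dn\times n}$ and the matrix $\mathsf{F}\in\mathbb{R}^{d\times d}$ by $\mathsf{F}^{-1}=\int_{\mathcal{K}}\varpi(\tau)\mathbf{f}(\tau)\mathbf{f}^\top(\tau)\,d\tau$. Then for all $\mathbf{x}(\cdot)\in\mathbb{L}^2_{\varpi}(\mathcal{K};\mathbb{R}^n)$ and all symmetric $U\succeq 0$ in $\mathbb{R}^{n\times n}$, $$\int_{\mathcal{K}}\varpi(\tau)\mathbf{x}^\top(\tau)U\mathbf{x}(\tau)\,d\tau\;\geq\;\boldsymbol{\vartheta}^\top(\mathsf{F}\otimes U)\boldsymbol{\vartheta},\qquad \boldsymbol{\vartheta}:=\int_{\mathcal{K}}\varpi(\tau)F(\tau)\mathbf{x}(\tau)\,d\tau\in\mathbb{R}^{dn}.$$ Moreover (optimality), if $U\succ 0$, then for every $\boldsymbol{\omega}\in\mathbb{R}^{dn}$,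 $$2\boldsymbol{\vartheta}^\top(I_d\otimes U)\boldsymbol{\omega}-\boldsymbol{\omega}^\top(\mathsf{F}^{-1}\otimes U)\boldsymbol{\omega}\;\leq\;\boldsymbol{\vartheta}^\top(\mathsf{F}\otimes U)\boldsymbol{\vartheta},$$ with equality for $\boldsymbol{\omega}=(\mathsf{F}\otimes I_n)\boldsymbol{\vartheta}$; here each left-hand side is a lower bound for $\int_{\mathcal{K}}\varpi\,\mathbf{x}^\top U\mathbf{x}\,d\tau$ (obtained from $\int_{\mathcal{K}}\varpi(\tau)(\mathbf{x}(\tau)-F^\top(\tau)\boldsymbol{\omega})^\top U(\mathbf{x}(\tau)-F^\top(\tau)\boldsymbol{\omega})\,d\tau\ge 0$), so the bound above is the largest among them.
   Context: For $m\in\mathbb{N}$, $\mathbb{L}^2_{\varpi}(\mathcal{K};\mathbb{R}^m)$ denotes the set of Lebesgue integrable functions $\phi:\mathcal{K}\to\mathbb{R}^m$ with $\int_{\mathcal{K}}\varpi(\tau)\phi^\top(\tau)\phi(\tau)\,d\tau<\infty$. $\mathrm{Col}_{i=1}^d f_i$ denotes the column vector $[f_1,\dots,f_d]^\top$; $\otimes$ is the Kronecker product and $I_n$ the $n\times n$ identity. *)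

From HB Require Import structures.
From mathcomp Require Import all_boot all_order all_algebra.
From mathcomp Require Import all_classical all_reals all_analysis.
From mathcomp Require Export mxtens.
Set Implicit Arguments. Unset Strict Implicit. Unset Printing Implicit Defensive.
Import Order.TTheory GRing.Theory Num.Theory.
Local Open Scope ring_scope.
Local Open Scope classical_set_scope.

(* Kronecker product: (A *t B) is mathcomp-real-closed's tensmx (row-major indexing). *)

Definition mxint (R : realType) m n (K : set R) (A : R -> 'M[R]_(m, n)) : 'M[R]_(m, n) :=
  \matrix_(i, j) Rintegral (@lebesgue_measure R) K (fun t => A t i j).

Definition posdef (R : realType) n (A : 'M[R]_n) : Prop :=
  A^T = A /\ forall v : 'cV[R]_n, v != 0 -> 0 < (v^T *m A *m v) 0 0.

Definition psd (R : realType) n (A : 'M[R]_n) : Prop :=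
  A^T = A /\ forall v : 'cV[R]_n, 0 <= (v^T *m A *m v) 0 0.

Definition L2w (R : realType) m (K : set R) (w : R -> R) (phi : R -> 'cV[R]_m) : Prop :=
  (forall i, measurable_fun K (fun t => phi t i 0)) /\
  (@lebesgue_measure R).-integrable K (fun t => (w t * ((phi t)^T *m phi t) 0 0)%:E).

Definition Fkron (R : realType) d n (f : R -> 'cV[R]_d) (t : R) : 'M[R]_(d * n, n) :=
  castmx (erefl (d * n), mul1n n) (f t *t (1%:M : 'M[R]_n)).

From HB Require Import structures.
From mathcomp Require Import all_boot all_order all_algebra.
From mathcomp Require Import all_classical all_reals all_analysis.
From mathcomp Require Import mxtens lra ring.
Set Implicit Arguments. Unset Strict Implicit. Unset Printing Implicit Defensive.
Import Order.TTheory GRing.Theory Num.Theory.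
Local Open Scope ring_scope.
Local Open Scope classical_set_scope.

(* For W : 'M_(d, n), expanding 0 <= \int w (x - W^T f)^T U (x - W^T f) gives
   J >= 2 <Theta, W U> - <W, F^-1 W U>, where Theta = \int w f x^T and
   <P, Q> = tr (P^T Q). Reshaping vectors of R^(d n) into d x n matrices turns
   the Kronecker quadratic forms of the statement into these Frobenius products
   (theta becomes Theta, omega becomes W). Completing the square,
   2 <Theta, W U> - <W, F^-1 W U> = q - <V, F^-1 V U> with V = W - F Theta and
   q = <Theta, F Theta U>; the subtracted term is itself an integral of a
   nonnegative quadratic form, so the maximum over W is q, attained at F Theta. *)

Section FrobeniusProduct.
Variable R : comPzRingType.

Definition mxdot m n (P Q : 'M[R]_(m, n)) : R := \tr (P^T *m Q).

Lemma mxdotE m n (P Q : 'M[R]_(m, n)) :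
  mxdot P Q = \sum_(j < n) \sum_(i < m) P i j * Q i j.
Proof. by apply: eq_bigr => j _; rewrite mxE; apply: eq_bigr => i _; rewrite mxE. Qed.

Lemma mxdotC m n (P Q : 'M[R]_(m, n)) : mxdot P Q = mxdot Q P.
Proof. by rewrite /mxdot -mxtrace_tr trmx_mul trmxK. Qed.

Lemma mxdot_mull m p n (A : 'M[R]_(p, m)) (P : 'M[R]_(m, n)) Q :
  mxdot (A *m P) Q = mxdot P (A^T *m Q).
Proof. by rewrite /mxdot trmx_mul mulmxA. Qed.

Lemma mxdot_mulr m p n (P : 'M[R]_(m, p)) (B : 'M[R]_(p, n)) Q :
  mxdot (P *m B) Q = mxdot P (Q *m B^T).
Proof. by rewrite /mxdot trmx_mul -mulmxA mxtrace_mulC mulmxA. Qed.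

Lemma mxdotBr m n (P Q1 Q2 : 'M[R]_(m, n)) :
  mxdot P (Q1 - Q2) = mxdot P Q1 - mxdot P Q2.
Proof. by rewrite /mxdot mulmxBr linearB. Qed.

Lemma mxdotBl m n (P1 P2 Q : 'M[R]_(m, n)) :
  mxdot (P1 - P2) Q = mxdot P1 Q - mxdot P2 Q.
Proof. by rewrite mxdotC mxdotBr !(mxdotC Q). Qed.

Lemma mxdotZl m n k (P Q : 'M[R]_(m, n)) : mxdot (k *: P) Q = k * mxdot P Q.
Proof. by rewrite /mxdot linearZ /= -scalemxAl linearZ. Qed.

Lemma mxdot_mul_trmx m n p (G : 'M[R]_m) (W : 'M[R]_(m, n))
    (U : 'M[R]_(n, p)) (V : 'M[R]_(m, p)) :
  mxdot G (W *m U *m V^T) = mxdot V (G^T *m W *m U).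
Proof.
by rewrite mxdotC mxdot_mulr trmxK [RHS]mxdotC /mxdot !trmx_mul trmxK !mulmxA.
Qed.

Lemma mxdot_outer m n (a : 'cV[R]_m) (b : 'cV[R]_n) (C : 'M[R]_(m, n)) :
  (a^T *m C *m b) 0 0 = mxdot (a *m b^T) C.
Proof. by rewrite mxdot_mulr trmxK /mxdot mulmxA trace_mx11. Qed.

End FrobeniusProduct.

Lemma big_mxtens_index (V : nmodType) m n (F : 'I_(m * n) -> V) :
  \sum_k F k = \sum_(i < m) \sum_(j < n) F (mxtens_index (i, j)).
Proof.
rewrite pair_big /= (reindex (@mxtens_index m n)) /=; first by apply: eq_bigr => -[].
by exists (@mxtens_unindex m n) => k _; rewrite (mxtens_indexK, mxtens_unindexK).
Qed.

Section TensorVectorization.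
Variable R : comPzRingType.

(* Inverse of the row-major vectorisation underlying [tensmx]:
   [mxtens_index (i, j)] is [i * n + j]. *)
Definition cvec_mx m n (v : 'cV[R]_(m * n)) : 'M[R]_(m, n) :=
  \matrix_(i, j) v (mxtens_index (i, j)) 0.

Lemma mxdot_cvec_mx m n (a b : 'cV[R]_(m * n)) :
  mxdot (cvec_mx a) (cvec_mx b) = (a^T *m b) 0 0.
Proof.
rewrite mxdotE mxE big_mxtens_index exchange_big /=.
by apply: eq_bigr => j _; apply: eq_bigr => i _; rewrite !mxE.
Qed.

Lemma cvec_mx_tens_mul m n p q (A : 'M[R]_(p, m)) (B : 'M[R]_(q, n))
    (v : 'cV[R]_(m * n)) :
  cvec_mx ((A *t B) *m v) = A *m cvec_mx v *m B^T.
Proof.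
apply/matrixP => i j; rewrite !mxE big_mxtens_index.
under [RHS]eq_bigr => l _ do rewrite !mxE mulr_suml.
rewrite [RHS]exchange_big /=; apply: eq_bigr => k _; apply: eq_bigr => l _.
by rewrite tensmxE !mxE mulrAC.
Qed.

Lemma tens_form_mxdot m n p q (A : 'M[R]_(p, m)) (B : 'M[R]_(q, n))
    (a : 'cV[R]_(p * q)) (b : 'cV[R]_(m * n)) :
  (a^T *m (A *t B) *m b) 0 0 = mxdot (cvec_mx a) (A *m cvec_mx b *m B^T).
Proof. by rewrite -mulmxA -mxdot_cvec_mx cvec_mx_tens_mul. Qed.

End TensorVectorization.

Section CompletingTheSquare.
Variables (R : comUnitRingType) (d n : nat) (G : 'M[R]_d) (U : 'M[R]_n).
Hypotheses (G_sym : G^T = G) (G_unit : G \in unitmx) (U_sym : U^T = U).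

Lemma mxdot_complete_square (T W : 'M[R]_(d, n)) :
  2 * mxdot T (W *m U) - mxdot W (G *m W *m U) =
  mxdot T (invmx G *m T *m U)
  - mxdot (W - invmx G *m T) (G *m (W - invmx G *m T) *m U).
Proof.
set W0 := invmx G *m T.
have GW0 : G *m W0 = T by rewrite mulmxA mulmxV // mul1mx.
have mxdot_swap V : mxdot V (T *m U) = mxdot T (V *m U).
  by rewrite mxdotC mxdot_mulr U_sym.
have W0_G : mxdot W0 (G *m W *m U) = mxdot T (W *m U).
  by rewrite mxdot_mull trmx_inv G_sym !mulmxA mulVmx // mul1mx.
rewrite mulmxBr mulmxBl GW0 !mxdotBr !mxdotBl W0_G !mxdot_swap.
ring.
Qed.

Lemma mxdot_complete_square_opt (T : 'M[R]_(d, n)) (W := invmx G *m T) :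
  2 * mxdot T (W *m U) - mxdot W (G *m W *m U) = mxdot T (W *m U).
Proof. by rewrite mxdot_complete_square subrr /mxdot trmx0 mul0mx mxtrace0 subr0. Qed.

End CompletingTheSquare.

Lemma posdef_unitmx (R : realType) n (A : 'M[R]_n) : posdef A -> A \in unitmx.
Proof.
move=> [_ A_pos]; rewrite -row_free_unit -kermx_eq0.
apply/rowV0P => u; rewrite sub_kermx => /eqP uA0.
have := A_pos u^T; rewrite trmxK uA0 mul0mx mxE ltxx trmx_eq0.
by case: eqP => // _ /(_ isT).
Qed.

Lemma posdef_psd (R : realType) n (A : 'M[R]_n) : posdef A -> psd A.
Proof.
move=> [A_sym A_pos]; split => // v.
by have [->|/A_pos/ltW //] := eqVneq v 0; rewrite mulmx0 mxE.
Qed.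

Section RealIntegrals.
Context d (T : measurableType d) (R : realType) (mu : {measure set T -> \bar R}).
Variable D : set T.
Hypothesis mD : measurable D.

Lemma integrable_RZr (f : T -> R) k :
  mu.-integrable D (EFin \o f) -> mu.-integrable D (EFin \o (fun x => f x * k)).
Proof.
move=> fi; apply: (eq_integrable mD _ _ _ (integrableZr mD k fi)) => x _.
by rewrite /= EFinM.
Qed.

Lemma integrable_RD (f g : T -> R) :
  mu.-integrable D (EFin \o f) -> mu.-integrable D (EFin \o g) ->
  mu.-integrable D (EFin \o (f \+ g)).
Proof.
move=> fi gi; apply: (eq_integrable mD _ _ _ (integrableD mD fi gi)) => x _.
by rewrite /= EFinD.
Qed.

Lemma integrable_Rsum I (s : seq I) (P : pred I) (f : I -> T -> R) :
  (forall i, P i -> mu.-integrable D (EFin \o f i)) ->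
  mu.-integrable D (EFin \o (fun x => \sum_(i <- s | P i) f i x)).
Proof.
move=> fi; apply: (eq_integrable mD _ _ _ (integrable_sum mD s fi)) => x _.
by rewrite /= sumEFin.
Qed.

Lemma Rintegral_sum I (s : seq I) (P : pred I) (f : I -> T -> R) :
  (forall i, P i -> mu.-integrable D (EFin \o f i)) ->
  \int[mu]_(x in D) (\sum_(i <- s | P i) f i x) =
  \sum_(i <- s | P i) \int[mu]_(x in D) f i x.
Proof.
move=> fi; elim: s => [|i s IH].
  by under eq_Rintegral do rewrite big_nil; rewrite big_nil Rintegral_cst // mul0r.
under eq_Rintegral do rewrite big_cons; rewrite big_cons.
case: ifPn => Pi //.
by rewrite RintegralD ?IH //; [exact: fi | exact: integrable_Rsum].
Qed.

Lemma integrable_mxdot p q (A : T -> 'M[R]_(p, q)) (C : 'M[R]_(p, q)) :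
  (forall i j, mu.-integrable D (EFin \o (fun t => A t i j))) ->
  mu.-integrable D (EFin \o (fun t => mxdot (A t) C)).
Proof.
move=> Ai; under eq_fun do rewrite mxdotE.
by apply: integrable_Rsum => j _; apply: integrable_Rsum => i _; exact: integrable_RZr.
Qed.

Lemma Rintegral_mxdot p q (A : T -> 'M[R]_(p, q)) (C : 'M[R]_(p, q)) :
  (forall i j, mu.-integrable D (EFin \o (fun t => A t i j))) ->
  \int[mu]_(t in D) mxdot (A t) C =
  mxdot (\matrix_(i, j) \int[mu]_(t in D) A t i j) C.
Proof.
move=> Ai; under eq_Rintegral do rewrite mxdotE.
rewrite mxdotE Rintegral_sum => [|j _]; last first.
  by apply: integrable_Rsum => i _; exact: integrable_RZr.
apply: eq_bigr => j _; rewrite Rintegral_sum => [|i _]; last exact: integrable_RZr.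
by apply: eq_bigr => i _; rewrite RintegralZr // mxE.
Qed.

End RealIntegrals.

Lemma quad_formB (R : comPzRingType) n (U : 'M[R]_n) (y z : 'cV[R]_n) : U^T = U ->
  ((y - z)^T *m U *m (y - z)) 0 0 =
  (y^T *m U *m y) 0 0 - 2 * (z^T *m U *m y) 0 0 + (z^T *m U *m z) 0 0.
Proof.
move=> U_sym; rewrite -!trace_mx11.
have cross : \tr (y^T *m U *m z) = \tr (z^T *m U *m y).
  by rewrite -mxtrace_tr !trmx_mul trmxK U_sym mulmxA.
rewrite [(y - z)^T]raddfB /= !mulmxBr !mulmxBl !linearB /= cross.
ring.
Qed.

Lemma normr_coord_mul_le (R : realDomainType) m p (a : 'cV[R]_m) (b : 'cV[R]_p) i j :
  `|a i 0 * b j 0| <= (a^T *m a) 0 0 + (b^T *m b) 0 0.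
Proof.
have coord_sqr_le k (c : 'cV[R]_k) l : `|c l 0| ^+ 2 <= (c^T *m c) 0 0.
  rewrite real_normK ?num_real // mxE (bigD1 l) //= mxE -expr2 lerDl.
  by apply: sumr_ge0 => l' _; rewrite mxE -expr2 sqr_ge0.
apply: le_trans (lerD (coord_sqr_le _ a i) (coord_sqr_le _ b j)).
rewrite normrM; have := normr_ge0 (a i 0); have := normr_ge0 (b j 0); nra.
Qed.

Section WeightedL2.
Variables (R : realType) (K : set R) (w : R -> R).
Hypotheses (mK : measurable K) (w_ge0 : forall t, K t -> 0 <= w t).
Hypothesis w_int : (@lebesgue_measure R).-integrable K (EFin \o w).
Local Notation mu := (@lebesgue_measure R).
(* [mK] mentions the default measurable structure of [R], which only unifies
   with the one of [mu] when [mu] is given explicitly, hence [(mu := mu)]. *)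

Lemma integrable_L2w_mul m p (a : R -> 'cV[R]_m) (b : R -> 'cV[R]_p) i j :
  L2w K w a -> L2w K w b ->
  mu.-integrable K (EFin \o (fun t => w t * (a t i 0 * b t j 0))).
Proof.
move=> [ma ia] [mb ib].
have mw : measurable_fun K w.
  by apply/measurable_realfun.measurable_EFinP; exact: measurable_int w_int.
pose g t := w t * ((a t)^T *m a t) 0 0 + w t * ((b t)^T *m b t) 0 0.
apply: (@le_integrable _ _ _ mu K mK _ (EFin \o g)).
- apply/measurable_realfun.measurable_EFinP.
  apply: measurable_realfun.measurable_funM; first exact: mw.
  by apply: measurable_realfun.measurable_funM; [exact: ma | exact: mb].
- move=> t Kt; rewrite /g /= lee_fin -mulrDr normrM ger0_norm ?w_ge0 //.
  have sqnorm_ge0 k (c : 'cV[R]_k) : 0 <= (c^T *m c) 0 0.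
    by rewrite mxE sumr_ge0 // => l _; rewrite mxE -expr2 sqr_ge0.
  rewrite [X in _ <= X]ger0_norm ?mulr_ge0 ?addr_ge0 ?w_ge0 //.
  by rewrite ler_wpM2l ?w_ge0 // normr_coord_mul_le.
- apply: (eq_integrable (mu := mu) mK _ _ _ (integrableD (mu := mu) mK ia ib)).
  by move=> t _; rewrite /= /g EFinD.
Qed.

Lemma integrable_L2w_form m p (a : R -> 'cV[R]_m) (b : R -> 'cV[R]_p) C :
  L2w K w a -> L2w K w b ->
  mu.-integrable K (EFin \o (fun t => w t * ((a t)^T *m C *m b t) 0 0)).
Proof.
move=> La Lb.
pose A t := w t *: (a t *m (b t)^T).
have iA := integrable_mxdot (mu := mu) mK (A := A) C.
apply: (eq_integrable (mu := mu) mK _ _ _ (iA _)).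
  by move=> t _; rewrite /= mxdotZl -mxdot_outer.
move=> i j; apply: (eq_integrable (mu := mu) mK _ _ _ (integrable_L2w_mul i j La Lb)).
by move=> t _; rewrite /= !mxE big_ord1 !mxE.
Qed.

Lemma Rintegral_L2w_form m p (a : R -> 'cV[R]_m) (b : R -> 'cV[R]_p) C :
  L2w K w a -> L2w K w b ->
  \int[mu]_(t in K) (w t * ((a t)^T *m C *m b t) 0 0) =
  mxdot (mxint K (fun t => w t *: (a t *m (b t)^T))) C.
Proof.
move=> La Lb; under eq_Rintegral do rewrite mxdot_outer -mxdotZl.
rewrite Rintegral_mxdot // => i j.
apply: (eq_integrable (mu := mu) mK _ _ _ (integrable_L2w_mul i j La Lb)).
by move=> t _; rewrite /= !mxE big_ord1 !mxE.
Qed.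

Lemma gram_form_ge0 d n (f : R -> 'cV[R]_d) (U : 'M[R]_n) (W : 'M[R]_(d, n)) :
  L2w K w f -> psd U ->
  0 <= mxdot (mxint K (fun t => w t *: (f t *m (f t)^T))) (W *m U *m W^T).
Proof.
move=> Lf [_ U_psd]; rewrite -Rintegral_L2w_form //; apply: Rintegral_ge0 => t Kt.
rewrite mulr_ge0 ?w_ge0 //; have := U_psd (W^T *m f t).
by rewrite trmx_mul trmxK !mulmxA.
Qed.

Lemma L2w_form_lower_bound d n (f : R -> 'cV[R]_d) (x : R -> 'cV[R]_n)
    (U : 'M[R]_n) (W : 'M[R]_(d, n)) :
  L2w K w f -> L2w K w x -> psd U ->
  2 * mxdot (mxint K (fun t => w t *: (f t *m (x t)^T))) (W *m U)
  - mxdot (mxint K (fun t => w t *: (f t *m (f t)^T))) (W *m U *m W^T)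
  <= \int[mu]_(t in K) (w t * ((x t)^T *m U *m x t) 0 0).
Proof.
move=> Lf Lx [U_sym U_psd].
have ix := integrable_L2w_form U Lx Lx.
have ifx := integrable_L2w_form (W *m U) Lf Lx.
have iff := integrable_L2w_form (W *m U *m W^T) Lf Lf.
rewrite -!Rintegral_L2w_form //.
rewrite -subr_ge0 opprB addrA [2 * _]mulrC -RintegralZr // -RintegralD //.
rewrite -RintegralB //; [|exact: integrable_RD|exact: integrable_RZr].
(* The integrand is [w t * (x t - W^T f t)^T U (x t - W^T f t)]. *)
apply: Rintegral_ge0 => t Kt; have := w_ge0 Kt; have := U_psd (x t - W^T *m f t).
rewrite quad_formB // trmx_mul trmxK !mulmxA; nra.
Qed.

End WeightedL2.

Lemma cvec_mx_Fkron_mul (R : realType) d n (f : R -> 'cV[R]_d) t (y : 'cV[R]_n) :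
  cvec_mx (Fkron n f t *m y) = f t *m y^T.
Proof.
have idx (l : 'I_n) : cast_ord (esym (mul1n n)) l = mxtens_index (ord0 : 'I_1, l).
  by apply: val_inj; rewrite /= mul0n.
apply/matrixP => i j; rewrite !mxE big_ord1 !mxE /Fkron.
under eq_bigr => l _ do rewrite castmxE cast_ord_id idx tensmxE -mulrA.
by rewrite -mulr_sumr -[in RHS](mul1mx y) mxE.
Qed.

Lemma cvec_mx_mxint_Fkron (R : realType) (K : set R) (w : R -> R) d n
    (f : R -> 'cV[R]_d) (x : R -> 'cV[R]_n) :
  cvec_mx (mxint K (fun t => w t *: (Fkron n f t *m x t))) =
  mxint K (fun t => w t *: (f t *m (x t)^T)).
Proof.
apply/matrixP => i j; rewrite mxE [LHS]mxE [RHS]mxE.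
by apply: eq_Rintegral => t _; rewrite -cvec_mx_Fkron_mul !mxE.
Qed.

Theorem theorem1 (R : realType) (K : set R) (w : R -> R) (d : nat)
  (f : R -> 'cV[R]_d)
  (mK : measurable K) (K_pos : (0 < @lebesgue_measure R K)%E)
  (w_ge0 : forall t, K t -> 0 <= w t)
  (w_int : (@lebesgue_measure R).-integrable K (fun t => (w t)%:E))
  (w_zeros : countable [set t | K t /\ w t = 0])
  (f_L2 : L2w K w f)
  (gram_pd : posdef (mxint K (fun t => w t *: (f t *m (f t)^T)))) :
  let Finv := mxint K (fun t => w t *: (f t *m (f t)^T)) in
  let FF := invmx Finv in
  forall (n : nat) (x : R -> 'cV[R]_n), L2w K w x ->
  let theta := mxint K (fun t => w t *: (Fkron n f t *m x t)) in
  forall U : 'M[R]_n,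
    let J := Rintegral (@lebesgue_measure R) K
               (fun t => w t * ((x t)^T *m U *m x t) 0 0) in
    (psd U -> (theta^T *m (FF *t U) *m theta) 0 0 <= J) /\
    (posdef U ->
       (forall omega : 'cV[R]_(d * n),
          2 * (theta^T *m ((1%:M : 'M[R]_d) *t U) *m omega) 0 0
            - (omega^T *m (Finv *t U) *m omega) 0 0
          <= (theta^T *m (FF *t U) *m theta) 0 0) /\
       (forall omega : 'cV[R]_(d * n),
          2 * (theta^T *m ((1%:M : 'M[R]_d) *t U) *m omega) 0 0
            - (omega^T *m (Finv *t U) *m omega) 0 0
          <= J) /\
       (let omega0 := (FF *t (1%:M : 'M[R]_n)) *m theta in
          2 * (theta^T *m ((1%:M : 'M[R]_d) *t U) *m omega0) 0 0
            - (omega0^T *m (Finv *t U) *m omega0) 0 0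
          = (theta^T *m (FF *t U) *m theta) 0 0)).
Proof.
move=> Finv FF n x Lx theta U J.
(* [K_pos] and [w_zeros] serve in the paper to make the Gram matrix [Finv]
   positive definite; [gram_pd] assumes this directly. *)
have G_unit := posdef_unitmx gram_pd.
have [G_sym _] := gram_pd.
set Th := mxint K (fun t => w t *: (f t *m (x t)^T)).
have theta_mx : cvec_mx theta = Th := cvec_mx_mxint_Fkron K w f x.
have gram_mxdot W : mxdot Finv (W *m U *m W^T) = mxdot W (Finv *m W *m U).
  by rewrite mxdot_mul_trmx G_sym.
have lower_bound W : psd U -> 2 * mxdot Th (W *m U) - mxdot W (Finv *m W *m U) <= J.
  by rewrite -gram_mxdot; exact: L2w_form_lower_bound.
have bound_mxdot : U^T = U ->
    (theta^T *m (FF *t U) *m theta) 0 0 = mxdot Th (FF *m Th *m U).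
  by rewrite tens_form_mxdot theta_mx => ->.
have lhs_mxdot om : U^T = U ->
    2 * (theta^T *m (1%:M *t U) *m om) 0 0 - (om^T *m (Finv *t U) *m om) 0 0 =
    2 * mxdot Th (cvec_mx om *m U) - mxdot (cvec_mx om) (Finv *m cvec_mx om *m U).
  by move=> U_sym; rewrite !tens_form_mxdot theta_mx mul1mx U_sym.
split=> [U_psd | U_pd].
  have [U_sym _] := U_psd.
  rewrite bound_mxdot // -(mxdot_complete_square_opt G_sym G_unit U_sym).
  exact: lower_bound.
have [U_sym _] := U_pd; have U_psd := posdef_psd U_pd.
rewrite bound_mxdot //; split; [|split] => [om|om|om0]; rewrite ?lhs_mxdot //.
- rewrite mxdot_complete_square // lerBlDr lerDl -gram_mxdot.
  exact: gram_form_ge0.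
- exact: lower_bound.
- rewrite /om0 cvec_mx_tens_mul trmx1 mulmx1 theta_mx.
  exact: mxdot_complete_square_opt.
Qed.
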